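(* Let $a=(a_1,\dots,a_d)\in\mathcal{UN}_d$ and let $A_a=(a_{ij})$ be a real symmetric matrix associated to $a$. Then there exists $\beta\in\mathbb{R}$ such that $a_{ij}^2=\beta^2$ for all $i\neq j$.
   Context: A polynomial in $\mathbb{R}[z]$ is hyperbolic if all its roots are real. A sequence $a\in\mathbb{R}^d$ is a Nuij sequence if for every hyperbolic $p\in\mathbb{R}[z]$ of degree $d$, $p_a(z,s):=p(z)+\sum_{k=1}^d a_k s^k p^{(k)}(z)$ is hyperbolic for all $s\in\mathbb{R}$. A Nuij sequence $a$ admits a universal determinantal representation if there exists a real symmetric $d\times d$ matrix $A_a$ such that for every monic hyperbolic polynomial $p(z)=(z+\lambda_1)\cdots(z+\lambda_d)$ of degree $d$ one has $p_a(z,s)=\det(zI+D+sA_a)$, where $D$ is the diagonal matrix with diagonal entries $\lambda_1,\dots,\lambda_d$ in an arbitrary order; such $A_a$ is called a matrix associated to $a$. $\mathcal{UN}_d$ is the set of Nuij sequences in $\mathbb{R}^d$ admitting a universal determinantal representation. *)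

From HB Require Import structures.
From mathcomp Require Import all_boot all_order all_algebra.
From mathcomp Require Import reals.
Set Implicit Arguments. Unset Strict Implicit. Unset Printing Implicit Defensive.
Import Order.TTheory GRing.Theory Num.Theory.
Local Open Scope ring_scope.

Section Nuij.
Variable R : realType.

Definition hyperbolic (p : {poly R}) : Prop :=
  exists (c : R) (rs : seq R), p = c *: \prod_(r <- rs) ('X - r%:P).

(* a : 'I_d -> R, where a k stands for a_{k+1};
   pa a p s = p(z) + sum_{k=1}^d a_k s^k p^(k)(z), as a polynomial in z *)
Definition pa (d : nat) (a : 'I_d -> R) (p : {poly R}) (s : R) : {poly R} :=
  p + \sum_(k < d) (a k * s ^+ k.+1) *: p^`(k.+1).

Definition nuij (d : nat) (a : 'I_d -> R) : Prop :=
  forall p : {poly R}, size p = d.+1 -> hyperbolic p ->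
    forall s : R, hyperbolic (pa a p s).

(* A is a (real symmetric) matrix associated to a: for every monic hyperbolic
   p = (z + l_1)...(z + l_d), with the l_i in any order,
   p_a(z,s) = det(zI + D + sA) for all real z, s. *)
Definition associated_matrix (d : nat) (a : 'I_d -> R) (A : 'M[R]_d) : Prop :=
  A^T = A /\
  forall (l : 'I_d -> R) (z s : R),
    (pa a (\prod_(i < d) ('X + (l i)%:P)) s).[z] =
      \det (z%:M + diag_mx (\row_i l i) + s *: A).

Definition UN (d : nat) (a : 'I_d -> R) : Prop :=
  nuij a /\ exists A : 'M[R]_d, associated_matrix a A.

End Nuij.

From HB Require Import structures.
From mathcomp Require Import all_boot all_order all_algebra.
From mathcomp Require Import reals.
From mathcomp Require Import fingroup perm.
Set Implicit Arguments. Unset Strict Implicit. Unset Printing Implicit Defensive.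
Import Order.TTheory GRing.Theory Num.Theory.
Local Open Scope ring_scope.

(* Put z = 0 in the defining identity of A: for a 0/1 diagonal D with n zeros,
   det(D + sA) equals p_a(0, s) for p = z^n (z + 1)^(d - n), so it depends on n only.
   Its coefficient of s is A_ii when the only zero of D sits at i, and its coefficient
   of s^2 is the principal minor A_ii A_jj - A_ij^2 when the zeros sit at i and j.
   Hence all diagonal entries agree, and then so do all the squares A_ij^2, i != j. *)

Section PermMoved.
Variable T : finType.

Lemma perm_moved (s : {perm T}) : s != 1%g -> exists k, s k != k.
Proof.
move=> s1; case: (pickP (fun k => s k != k)) => [k sk | s_fix]; first by exists k.
by case/eqP: s1; apply/permP => x; rewrite perm1; apply/eqP/negbFE/s_fix.
Qed.

Lemma perm_fix_notin2 (i j : T) (s : {perm T}) : i != j ->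
  (forall k, k != i -> k != j -> s k = k) -> s = 1%g \/ s = tperm i j.
Proof.
move=> ij s_fix.
have s_in2 k : (k == i) || (k == j) -> (s k == i) || (s k == j).
  move=> kij; apply/negPn; rewrite negb_or; apply/negP => /andP[ski skj].
  have /perm_inj Esk := s_fix _ ski skj.
  by move: ski skj; rewrite Esk; case/orP: kij => /eqP->; rewrite eqxx.
have /orP[/eqP si | /eqP si] : (s i == i) || (s i == j)
  by apply: s_in2; rewrite eqxx.
all: have /orP[/eqP sj | /eqP sj] : (s j == i) || (s j == j)
  by apply: s_in2; rewrite eqxx orbT.
all: try by case/eqP: ij; apply: (@perm_inj _ s); rewrite si sj.
- left; apply/permP => x; rewrite perm1.
  have [->//|xi] := eqVneq x i; have [->//|xj] := eqVneq x j.
  exact: s_fix.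
- right; apply/permP => x.
  have [->|xi] := eqVneq x i; first by rewrite tpermL.
  have [->|xj] := eqVneq x j; first by rewrite tpermR.
  by rewrite tpermD 1?eq_sym // s_fix.
Qed.

Lemma card_moved_gt1 (i : T) (s : {perm T}) : s != 1%g ->
  (1 < #|[pred k | pred1 i k || (s k != k)]|)%N.
Proof.
case/perm_moved=> k sk; apply/card_gt1P; exists k, (s k); split.
- by rewrite inE sk orbT.
- by rewrite inE (inj_eq perm_inj) sk orbT.
- by rewrite eq_sym.
Qed.

Lemma card_moved_gt2 (i j : T) (s : {perm T}) : i != j -> s != 1%g ->
  s != tperm i j -> (2 < #|[pred k | pred2 i j k || (s k != k)]|)%N.
Proof.
move=> ij s1 sij.
case: (pickP (fun k => [&& s k != k, k != i & k != j])) => [k /and3P[sk ki kj] | s_fix].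
  apply/card_gt2P; exists i, j, k.
  by rewrite !inE !eqxx sk !orbT ij (eq_sym j) kj ki.
have fix_out k : k != i -> k != j -> s k = k.
  by move=> ki kj; apply/eqP; move: (s_fix k); rewrite ki kj !andbT => /negbFE.
by case: (perm_fix_notin2 ij fix_out) => s_eq; rewrite s_eq eqxx in s1 sij.
Qed.

End PermMoved.

Section Pencil.
Variables (R : comNzRingType) (d : nat) (A : 'M[R]_d).

Definition pencil (e : 'I_d -> R) : 'M[{poly R}]_d :=
  \matrix_(k, l) ((e k *+ (k == l))%:P + 'X * (A k l)%:P).

Definition indC (Z : pred 'I_d) (k : 'I_d) : R := (~~ Z k)%:R.

Lemma horner_det_pencil e s :
  (\det (pencil e)).[s] = \det (diag_mx (\row_k e k) + s *: A).
Proof.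
rewrite -horner_evalE -det_map_mx; congr (\det _); apply/matrixP => k l.
by rewrite !mxE /= horner_evalE hornerD hornerM hornerX !hornerC mulrC.
Qed.

Lemma pencil_diag0 e k : e k = 0 -> pencil e k k = 'X * (A k k)%:P.
Proof. by move=> ek; rewrite mxE ek mul0rn add0r. Qed.

Lemma pencil_offdiag e k l : k != l -> pencil e k l = 'X * (A k l)%:P.
Proof. by move=> kl; rewrite mxE (negbTE kl) mulr0n add0r. Qed.

Lemma horner0_pencil_diag e k : (pencil e k k).[0] = e k.
Proof. by rewrite mxE eqxx mulr1n hornerD hornerM hornerX !hornerC mul0r addr0. Qed.

Lemma coef_det_pencil e m : (\det (pencil e))`_m =
  \sum_(s : 'S_d) (-1) ^+ s * (\prod_k pencil e k (s k))`_m.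
Proof.
rewrite /determinant coef_sum; apply: eq_bigr => s _.
by case: (odd_perm s); rewrite /= ?expr1 ?expr0 ?mulN1r ?mul1r ?coefN.
Qed.

(* Every factor taken on a zero of [e] or off the diagonal is a multiple of 'X. *)
Lemma coef_prod_pencil_eq0 e (Z : pred 'I_d) (s : 'S_d) m :
  (forall k, Z k -> e k = 0) -> (m < #|[pred k | Z k || (s k != k)]|)%N ->
  (\prod_k pencil e k (s k))`_m = 0.
Proof.
move=> eZ m_lt; rewrite (bigID [pred k | Z k || (s k != k)]) /=.
rewrite (eq_bigr (fun k => 'X * (A k (s k))%:P)); last first.
  move=> k; have [-> | sk] := eqVneq (s k) k; last by rewrite pencil_offdiag 1?eq_sym.
  by rewrite orbF => /eZ /pencil_diag0.
by rewrite big_split /= prodr_const -mulrA mulrC coefMXn m_lt.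
Qed.

Lemma coef1_det_pencil i : (\det (pencil (indC (pred1 i))))`_1 = A i i.
Proof.
rewrite coef_det_pencil (bigD1 1%g) //= [X in _ + X]big1 ?addr0 => [|s s1]; last first.
  rewrite (@coef_prod_pencil_eq0 _ (pred1 i)) ?mulr0 ?card_moved_gt1 //.
  by move=> k ik; rewrite /indC ik.
rewrite odd_perm1 expr0 mul1r (bigD1 i) //= perm1 pencil_diag0 /indC /= ?eqxx //.
rewrite -mulrA coefXM /= coefCM -horner_coef0 horner_prod big1 ?mulr1 //.
by move=> k ki; rewrite perm1 horner0_pencil_diag /indC /= ki.
Qed.

Lemma coef2_det_pencil i j : i != j ->
  (\det (pencil (indC (pred2 i j))))`_2 = A i i * A j j - A i j * A j i.
Proof.
move=> ij; set e := indC (pred2 i j).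
have e0 k : pred2 i j k -> e k = 0 by move=> kij; rewrite /e /indC kij.
have prod_rest (s : 'S_d) : (forall k, k != i -> k != j -> s k = k) ->
    (\prod_(k | (k != i) && (k != j)) pencil e k (s k)).[0] = 1.
  move=> s_fix; rewrite horner_prod big1 // => k /andP[ki kj].
  by rewrite s_fix // horner0_pencil_diag /e /indC /= (negbTE ki) (negbTE kj).
have t1 : tperm i j != 1%g.
  by apply/eqP => /permP /(_ i); rewrite perm1 tpermL => /eqP; rewrite eq_sym (negbTE ij).
rewrite coef_det_pencil (bigD1 1%g) //= (bigD1 (tperm i j)) //=.
rewrite [X in _ + (_ + X)]big1 ?addr0 => [|s /andP[s_t s1]]; last first.
  by rewrite (coef_prod_pencil_eq0 e0 (card_moved_gt2 ij s_t s1)) mulr0.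
rewrite odd_perm1 odd_tperm ij expr0 expr1 mul1r mulN1r.
have split_ij (F : 'I_d -> {poly R}) :
    \prod_k F k = F i * (F j * \prod_(k | (k != i) && (k != j)) F k).
  by rewrite (bigD1 i) //= (bigD1 j) 1?eq_sym.
rewrite !split_ij !perm1 tpermL tpermR.
rewrite !pencil_diag0 ?e0 ?pencil_offdiag //= ?eqxx ?orbT // 1?eq_sym //.
rewrite -!mulrA !coefXM /= !coefCM !coefXM /= !coefCM -!horner_coef0.
by rewrite !prod_rest ?mulr1 // => k ki kj; rewrite ?perm1 ?tpermD 1?eq_sym.
Qed.

End Pencil.
Arguments indC {R d} Z k.

Lemma prod_XaddC_indC (R : comNzRingType) d (Z : pred 'I_d) :
  \prod_k ('X + (indC Z k)%:P) = 'X ^+ #|Z| * ('X + 1) ^+ #|[predC Z]| :> {poly R}.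
Proof.
rewrite (bigID Z) /= (eq_bigr (fun=> 'X)) => [|k Zk]; last by rewrite /indC Zk addr0.
rewrite [X in _ * X](eq_bigr (fun=> 'X + 1)) => [|k Zk]; last by rewrite /indC (negbTE Zk).
by rewrite !prodr_const.
Qed.

Lemma poly_horner_eq (R : numDomainType) (p q : {poly R}) :
  (forall x, p.[x] = q.[x]) -> p = q.
Proof.
move=> pq; apply/eqP; rewrite -subr_eq0; apply/eqP.
apply: (@roots_geq_poly_eq0 _ _ [seq n%:R | n <- iota 0 (size (p - q))]).
- by apply/allP => x _; rewrite /root hornerD hornerN pq subrr.
- by rewrite map_inj_uniq ?iota_uniq // => m n /eqP; rewrite eqr_nat => /eqP.
- by rewrite size_map size_iota.
Qed.

Lemma det_pencil_indC_card (R : realType) d (a : 'I_d -> R) (A : 'M[R]_d)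
    (Z1 Z2 : pred 'I_d) : associated_matrix a A -> #|Z1| = #|Z2| ->
  \det (pencil A (indC Z1)) = \det (pencil A (indC Z2)).
Proof.
move=> [_ A_pa] Z12; apply: poly_horner_eq => s.
have pencil_pa Z : (\det (pencil A (indC Z))).[s] =
    (pa a ('X ^+ #|Z| * ('X + 1) ^+ #|[predC Z]|) s).[0].
  by rewrite horner_det_pencil -prod_XaddC_indC A_pa raddf0 add0r.
have Z12C : #|[predC Z1]| = #|[predC Z2]|.
  by apply/eqP; rewrite -(eqn_add2l #|Z1|) {2}Z12 !cardC.
by rewrite !pencil_pa Z12 Z12C.
Qed.

Theorem lemma3p4 (R : realType) (d : nat) (a : 'I_d -> R) (A : 'M[R]_d) :
  UN a -> associated_matrix a A ->
  exists beta : R, forall i j : 'I_d, i != j -> A i j ^+ 2 = beta ^+ 2.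
Proof.
move=> _ A_assoc.
have A_sym i j : A j i = A i j by case: A_assoc => /matrixP /(_ i j); rewrite mxE.
have A_diag i k : A i i = A k k.
  by rewrite -!coef1_det_pencil (det_pencil_indC_card (Z2 := pred1 k) A_assoc) // !card1.
have A_offdiag i j k l : i != j -> k != l -> A i j ^+ 2 = A k l ^+ 2.
  move=> ij kl; have := coef2_det_pencil A ij.
  rewrite (det_pencil_indC_card (Z2 := pred2 k l) A_assoc); last by rewrite !card2 ij kl.
  rewrite coef2_det_pencil // (A_sym i j) (A_sym k l) (A_diag j i) (A_diag k i) (A_diag l i).
  by move/subrI; rewrite !expr2.
case: (pickP (fun ij : 'I_d * 'I_d => ij.1 != ij.2)) => [[i j] /= ij | no_pair].
  by exists (A i j) => k l kl; apply: A_offdiag.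
by exists 0 => k l kl; move: (no_pair (k, l)); rewrite /= kl.
Qed.
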